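(* Let $r\ge1$, $p_n\in[0,1]$, $L\ge1$, and $\mathbf s_1,\dots,\mathbf s_L\in V(G_n)_r$ with $a=|\bigcup_{j=1}^L\bar{\mathbf s}_j|$, and assume $\bar{\mathbf s}_i\cap\bigcup_{j\ne i}\bar{\mathbf s}_j\ne\emptyset$ for all $1\le i\le L$. Then $$\big|\mathbb E[Z_{\mathbf s_1}Z_{\mathbf s_2}\cdots Z_{\mathbf s_L}]-p_n^a\big|\le(2^L-1)p_n^{a+1}.$$ Moreover, for $L=2$, $\mathbb E[Z_{\mathbf s_1}Z_{\mathbf s_2}]\ge p_n^a(1-p_n)\ge0$.
   Context: $V(G_n)$ is a finite vertex set; $V(G_n)_r$ is the set of $r$-tuples of distinct elements, $\bar{\mathbf s}$ the set of entries of $\mathbf s$. $\{X_v\}_{v\in V(G_n)}$ are i.i.d. Bernoulli$(p_n)$, $X_{\mathbf s}=\prod_{u=1}^rX_{s_u}$, $Z_{\mathbf s}=X_{\mathbf s}-p_n^r$. *)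

From HB Require Import structures.
From mathcomp Require Import all_boot all_order all_algebra.
Set Implicit Arguments. Unset Strict Implicit. Unset Printing Implicit Defensive.
Import Order.TTheory GRing.Theory Num.Theory.
Local Open Scope ring_scope.

(* Probability space for i.i.d. Bernoulli(p) variables {X_v}_{v in V}:
   outcomes are configurations w : {ffun V -> bool}, X_v(w) = w v,
   with probability prod_v (p if w v else 1 - p). *)
Definition bern_weight (R : ringType) (V : finType) (p : R)
  (w : {ffun V -> bool}) : R :=
  \prod_(v : V) (if w v then p else 1 - p).

Definition Expect (R : ringType) (V : finType) (p : R)
  (F : {ffun V -> bool} -> R) : R :=
  \sum_(w : {ffun V -> bool}) bern_weight p w * F w.

Definition Xv (R : ringType) (V : finType) (w : {ffun V -> bool}) (v : V) : R :=
  (w v)%:R.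

Definition Xs (R : ringType) (V : finType) (r : nat) (w : {ffun V -> bool})
  (s : r.-tuple V) : R :=
  \prod_(u < r) Xv R w (tnth s u).

Definition Zs (R : ringType) (V : finType) (r : nat) (p : R)
  (w : {ffun V -> bool}) (s : r.-tuple V) : R :=
  Xs R w s - p ^+ r.

Definition sbar (V : finType) (r : nat) (s : r.-tuple V) : {set V} :=
  [set x in s].

(* Expand the product of the centred variables X_{S_j} - p^|S_j| over the
   subsets F of indices whose X-factor is kept.  Since the X_v are independent,
   the term of F has expectation
   (-1)^(L-|F|) p^(sum_{j notin F} |S_j| + |U_{j in F} S_j|).
   F = everything gives p^a.  Any other F misses some index i, and as S_i meets
   the other sets, sum_{j notin F} |S_j| + |U_{j in F} S_j| > a; so each of the
   2^L - 1 remaining terms is at most p^(a+1) in absolute value.  For L = 2 the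
   expectation is exactly p^|A u B| - p^(|A|+|B|), and |A| + |B| > |A u B|. *)

From HB Require Import structures.
From mathcomp Require Import all_boot all_order all_algebra.
From mathcomp Require Import ring.
Import Order.TTheory GRing.Theory Num.Theory.
Local Open Scope ring_scope.
Set Implicit Arguments.
Unset Strict Implicit.

Lemma prodr_natb (R : pzSemiRingType) (I : finType) (P b : pred I) :
  \prod_(i | P i) ((b i)%:R : R) = [forall (i | P i), b i]%:R.
Proof.
have nat_of_andb : {morph nat_of_bool : x y / x && y >-> (x * y)%N}.
  by move=> x y; rewrite mulnb.
have nat_of_true : nat_of_bool true = 1%N by [].
by rewrite -natr_prod -(big_morph _ nat_of_andb nat_of_true) big_andE.
Qed.

Lemma prodrDr_ffun (R : comPzSemiRingType) (I : finType) (x y : I -> R) :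
  \prod_i (x i + y i)
    = \sum_(f : {ffun I -> bool}) \prod_(i | f i) x i * \prod_(i | ~~ f i) y i.
Proof.
rewrite (eq_bigr (fun i => \sum_(b : bool) if b then x i else y i)); last first.
  by move=> i _; rewrite big_bool.
rewrite bigA_distr_bigA; apply: eq_bigr => f _.
rewrite (bigID (fun i => f i)) /=.
by congr (_ * _); apply: eq_bigr => i; [move=> -> | move=> /negPf ->].
Qed.

Section Bernoulli.
Variables (R : comNzRingType) (V : finType) (p : R).
Implicit Types (w : {ffun V -> bool}) (A B : {set V}) (F G : {ffun V -> bool} -> R).

Definition Xset w A : R := (A \subset [set v | w v])%:R.

Lemma Xset0 w : Xset w set0 = 1.
Proof. by rewrite /Xset sub0set. Qed.

Lemma XsetU w A B : Xset w (A :|: B) = Xset w A * Xset w B.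
Proof. by rewrite /Xset subUset -natrM mulnb. Qed.

Lemma Xset_bigcup w (I : finType) (P : pred I) (S : I -> {set V}) :
  Xset w (\bigcup_(i | P i) S i) = \prod_(i | P i) Xset w (S i).
Proof. exact: (big_morph _ (XsetU w) (Xset0 w)). Qed.

Lemma Xset_prod w A : Xset w A = \prod_(v in A) (w v)%:R.
Proof.
rewrite prodr_natb /Xset; congr (nat_of_bool _)%:R.
by apply/subsetP/forall_inP => H v /H; rewrite inE.
Qed.

Lemma Xs_Xset r w (s : r.-tuple V) : Xs R w s = Xset w (sbar s).
Proof.
rewrite /Xs /Xv /Xset prodr_natb; congr (nat_of_bool _)%:R.
apply/forallP/subsetP => [H v | H u].
  by rewrite !inE => /tnthP [u ->]; exact: H u.
by move: (H (tnth s u)); rewrite !inE mem_tnth => /(_ isT).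
Qed.

Lemma eq_Expect F G : F =1 G -> Expect p F = Expect p G.
Proof. by move=> eqFG; apply: eq_bigr => w _; rewrite eqFG. Qed.

Lemma Expect_sum (I : finType) (G : I -> {ffun V -> bool} -> R) :
  Expect p (fun w => \sum_i G i w) = \sum_i Expect p (G i).
Proof. by rewrite /Expect exchange_big; apply: eq_bigr => w _; rewrite mulr_sumr. Qed.

Lemma Expect_add F G : Expect p (fun w => F w + G w) = Expect p F + Expect p G.
Proof. by rewrite /Expect -big_split; apply: eq_bigr => w _; rewrite mulrDr. Qed.

Lemma Expect_mull c F : Expect p (fun w => c * F w) = c * Expect p F.
Proof. by rewrite /Expect mulr_sumr; apply: eq_bigr => w _; rewrite mulrCA. Qed.

Lemma Expect_prod (f : V -> bool -> R) :
  Expect p (fun w => \prod_v f v (w v))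
    = \prod_v (p * f v true + (1 - p) * f v false).
Proof.
rewrite /Expect /bern_weight.
rewrite (eq_bigr (fun w => \prod_v ((if w v then p else 1 - p) * f v (w v)))).
  2: by move=> w _; rewrite big_split.
rewrite -(bigA_distr_bigA (fun v b => (if b then p else 1 - p) * f v b)).
by apply: eq_bigr => v _; rewrite big_bool.
Qed.

Lemma Expect_Xset A : Expect p (fun w => Xset w A) = p ^+ #|A|.
Proof.
under eq_Expect do rewrite Xset_prod big_mkcond.
rewrite (Expect_prod (fun v b => if v \in A then b%:R else 1)) -prodr_const.
rewrite (bigID (mem A)) /= [X in _ * X]big1.
  by rewrite mulr1; apply: eq_bigr => v ->; rewrite mulr1 mulr0 addr0.
by move=> v /negPf ->; rewrite !mulr1 addrC subrK.
Qed.

Lemma Expect_prod_centered (I : finType) (S : I -> {set V}) :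
  Expect p (fun w => \prod_i (Xset w (S i) - p ^+ #|S i|))
    = \sum_(f : {ffun I -> bool})
        \prod_(i | ~~ f i) - p ^+ #|S i| * p ^+ #|\bigcup_(i | f i) S i|.
Proof.
under eq_Expect do [rewrite prodrDr_ffun; under eq_bigr do rewrite -Xset_bigcup mulrC].
by rewrite Expect_sum; apply: eq_bigr => f _; rewrite Expect_mull Expect_Xset.
Qed.

Lemma Expect_pair_centered A B :
  Expect p (fun w => (Xset w A - p ^+ #|A|) * (Xset w B - p ^+ #|B|))
    = p ^+ #|A :|: B| - p ^+ (#|A| + #|B|).
Proof.
rewrite (@eq_Expect _ (fun w => Xset w (A :|: B) + (- p ^+ #|B|) * Xset w A
    + ((- p ^+ #|A|) * Xset w B + p ^+ (#|A| + #|B|) * Xset w set0))).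
  2: by move=> w; rewrite XsetU Xset0 exprD; ring.
rewrite !Expect_add !Expect_mull !Expect_Xset cards0 expr0 exprD; ring.
Qed.

End Bernoulli.

Section Cardinals.
Variable T : finType.
Implicit Types A B : {set T}.

Lemma card_setU_lt A B : A :&: B != set0 -> (#|A :|: B| < #|A| + #|B|)%N.
Proof.
by rewrite setI_eq0 => /negPf disAB; rewrite (ltn_leqif (leq_card_setU A B)) disAB.
Qed.

Lemma card_bigcup_le (I : finType) (P : pred I) (S : I -> {set T}) :
  (#|\bigcup_(i | P i) S i| <= \sum_(i | P i) #|S i|)%N.
Proof.
elim/big_ind2: _ => [|m A n B leAm leBn|//]; first by rewrite cards0.
exact: leq_trans (leq_card_setU A B).1 (leq_add leAm leBn).
Qed.

Lemma card_bigcup_lt (I : finType) (P : pred I) (S : I -> {set T}) i :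
  ~~ P i -> S i :&: \bigcup_(j | j != i) S j != set0 ->
  (#|\bigcup_j S j| < #|\bigcup_(j | P j) S j| + \sum_(j | ~~ P j) #|S j|)%N.
Proof.
move=> nPi meet_i.
have sub_i : \bigcup_(j | j != i) S j
    \subset \bigcup_(j | P j) S j :|: \bigcup_(j | ~~ P j && (j != i)) S j.
  apply/subsetP => x /bigcupP [j ji xj]; rewrite inE.
  by case Pj: (P j); apply/orP; [left | right]; apply/bigcupP; exists j; rewrite ?Pj.
rewrite (bigD1 i) //= [in X in (_ < X)%N](bigD1 i nPi) /= addnCA.
apply: leq_trans (card_setU_lt meet_i) _; rewrite leq_add2l.
apply: leq_trans (subset_leq_card sub_i) _.
exact: leq_trans (leq_card_setU _ _).1 (leq_add (leqnn _) (card_bigcup_le _ _)).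
Qed.

End Cardinals.

Section CenteredBounds.
Variables (R : numDomainType) (V : finType) (p : R).
Hypothesis p01 : 0 <= p <= 1.

Lemma norm_centered_term_le (I : finType) (S : I -> {set V})
    (f : {ffun I -> bool}) i :
  ~~ f i -> S i :&: \bigcup_(j | j != i) S j != set0 ->
  `|\prod_(j | ~~ f j) - p ^+ #|S j| * p ^+ #|\bigcup_(j | f j) S j| |
    <= p ^+ (#|\bigcup_j S j|).+1.
Proof.
case/andP: p01 => p_ge0 p_le1 nfi meet_i.
rewrite normrM normr_prod (eq_bigr (fun j => p ^+ #|S j|)); last first.
  by move=> j _; rewrite normrN normrX ger0_norm.
rewrite normrX ger0_norm // prodrXr -exprD addnC.
exact: ler_wiXn2l p_ge0 p_le1 _ _ (card_bigcup_lt nfi meet_i).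
Qed.

Lemma Expect_prod_centered_dist_le (I : finType) (S : I -> {set V}) :
  (forall i, S i :&: \bigcup_(j | j != i) S j != set0) ->
  `|Expect p (fun w => \prod_i (Xset R w (S i) - p ^+ #|S i|))
      - p ^+ #|\bigcup_i S i| |
    <= (2 ^ #|I| - 1)%:R * p ^+ (#|\bigcup_i S i|).+1.
Proof.
move=> meet.
have term_le (f : {ffun I -> bool}) : f != [ffun=> true] ->
    `|\prod_(i | ~~ f i) - p ^+ #|S i| * p ^+ #|\bigcup_(i | f i) S i| |
      <= p ^+ (#|\bigcup_i S i|).+1.
  move=> f_neq_true; have [i nfi] : exists i, ~~ f i.
    apply/existsP; apply: contraR f_neq_true => /existsPn f_true.
    by apply/eqP/ffunP => i; rewrite ffunE; move/negPn: (f_true i).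
  exact: norm_centered_term_le nfi (meet i).
rewrite Expect_prod_centered (bigD1 [ffun=> true]) //= big_pred0; last first.
  by move=> i; rewrite ffunE.
rewrite mul1r (eq_bigl xpredT); last by move=> i; rewrite ffunE.
rewrite addrAC subrr add0r.
apply: le_trans (ler_norm_sum _ _ _) (le_trans (ler_sum _ term_le) _).
rewrite (eq_bigl (mem (predC1 [ffun=> true]))) // sumr_const cardC1.
by rewrite card_ffun card_bool subn1 mulr_natl.
Qed.

Lemma Expect_pair_centered_ge (A B : {set V}) :
  A :&: B != set0 ->
  p ^+ #|A :|: B| * (1 - p)
    <= Expect p (fun w => (Xset R w A - p ^+ #|A|) * (Xset R w B - p ^+ #|B|)).
Proof.
case/andP: p01 => p_ge0 p_le1 meetAB.
rewrite Expect_pair_centered mulrBr mulr1 lerD2l lerN2 -exprSr.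
exact: ler_wiXn2l p_ge0 p_le1 _ _ (card_setU_lt meetAB).
Qed.

End CenteredBounds.

Theorem lemma4p1 (R : realFieldType) (V : finType) (r L : nat) (p : R)
  (s : 'I_L -> r.-tuple V) :
  (1 <= r)%N -> 0 <= p <= 1 -> (1 <= L)%N ->
  (forall j, uniq (s j)) ->
  (forall i : 'I_L,
     sbar (s i) :&: (\bigcup_(j | j != i) sbar (s j)) != set0) ->
  let a := #|\bigcup_(j < L) sbar (s j)| in
  `| Expect p (fun w => \prod_(j < L) Zs p w (s j)) - p ^+ a |
     <= (2 ^ L - 1)%:R * p ^+ a.+1
  /\ (L = 2%N ->
      p ^+ a * (1 - p) <= Expect p (fun w => \prod_(j < L) Zs p w (s j))
      /\ 0 <= p ^+ a * (1 - p)).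
Proof.
move=> _ p01 _ uniq_s meet a.
have Zs_centered w j : Zs p w (s j) = Xset R w (sbar (s j)) - p ^+ #|sbar (s j)|.
  by rewrite /Zs Xs_Xset /sbar cardsE (card_uniqP (uniq_s j)) size_tuple.
under eq_Expect do under eq_bigr do rewrite Zs_centered.
split; first by have := Expect_prod_centered_dist_le p01 meet; rewrite card_ord.
move=> L2; subst L; split; last first.
  by case/andP: p01 => p_ge0 p_le1; rewrite mulr_ge0 ?exprn_ge0 ?subr_ge0.
rewrite /a !big_ord_recl !big_ord0 !setU0.
under eq_Expect do rewrite big_ord_recl big_ord1.
apply: Expect_pair_centered_ge => //.
by have := meet ord0; rewrite (big_pred1 (lift ord0 ord0)) // => -[[|[|]]].
Qed.
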